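(* Let $(r_n)_{n\ge1}$ be the unique sequence of positive reals satisfying $r_n=2n-1+\dfrac{n^2}{r_{n+1}}$ for all $n\ge1$ (equivalently $r_1=4/\pi$ and $r_{n+1}=n^2/(r_n-(2n-1))$). Then for all $n\ge1$, $$\Big\lfloor r_n+\tfrac12\Big\rfloor=\Big\lfloor (1+\sqrt2)\,n-\tfrac12\sqrt2\Big\rfloor.$$ *)

From Stdlib Require Export Reals ZArith.
Open Scope R_scope.

(* floor of a real number, as an integer: Int_part x = up x - 1, i.e. the
   greatest integer <= x. *)
Definition floorR (x : R) : Z := Int_part x.

(* The approximation q_n = (1 + sqrt 2)(n - 1/2) satisfies the same recurrence up to
   a perturbation: q_n = 2n - 1 + (n^2 - 1/4)/q_(n+1), the silver ratio being the root
   of s^2 = 2s + 1. Since r_(n+1), q_(n+1) >= 2n, the error d_n = r_n - q_n obeys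
   |d_n| <= |d_(n+1)|/4 + 1/(4 q_(n+1)); together with the crude bound |d_n| <= n this
   forces |d_n| <= 3/(20n). On the other hand r_n + 1/2 = (1 + sqrt 2) n - sqrt 2/2 + d_n,
   and the point (1 + sqrt 2) n - sqrt 2/2 = n + (2n - 1)/sqrt 2 stays farther than
   3/(20n) from every integer, because m^2 - 2j^2 is odd for odd m. *)

From Stdlib Require Import Reals ZArith Lra Lia Psatz.
Open Scope R_scope.

Lemma Int_part_add_small (x e : R) :
  (forall k : Z, Rabs e < Rabs (x - IZR k)) -> Int_part (x + e) = Int_part x.
Proof.
  intros hgap; symmetry; apply Int_part_spec.
  destruct (base_Int_part x) as [hlo hhi].
  pose proof (hgap (Int_part x)) as h0; pose proof (hgap (Int_part x + 1)%Z) as h1.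
  rewrite plus_IZR in h1.
  rewrite (Rabs_pos_eq (x - _)) in h0 by lra.
  rewrite (Rabs_left (x - _)) in h1 by lra.
  pose proof (Rle_abs e); pose proof (Rle_abs (- e)); rewrite Rabs_Ropp in *.
  lra.
Qed.

Lemma odd_square_ne_twice_square (N j : Z) : ((2 * N - 1) * (2 * N - 1) - 2 * j * j <> 0)%Z.
Proof.
  replace ((2 * N - 1) * (2 * N - 1) - 2 * j * j)%Z
    with (2 * (2 * N * N - 2 * N - j * j) + 1)%Z by ring.
  lia.
Qed.

(* Iterating the contraction gives e n <= C n (2c)^k for every k: the loss (n+1)/n <= 2
   per step is absorbed by the factor 2c < 1. *)
Lemma nonpos_of_contraction (e : nat -> R) (c C : R) :
  0 <= c -> 2 * c < 1 -> 0 <= C ->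
  (forall n, (1 <= n)%nat -> e n <= c * e (S n)) ->
  (forall n, (1 <= n)%nat -> e n <= C * INR n) ->
  forall n, (1 <= n)%nat -> e n <= 0.
Proof.
  intros hc hc1 hC hcontr hgrowth.
  assert (hiter : forall k n, (1 <= n)%nat -> e n <= C * INR n * (2 * c) ^ k).
  { induction k as [| k IH]; intros n hn.
    - rewrite pow_O, Rmult_1_r; exact (hgrowth n hn).
    - assert (hx : 1 <= INR n) by (apply (le_INR 1); exact hn).
      assert (hq : 0 <= (2 * c) ^ k) by (apply pow_le; lra).
      pose proof (IH (S n) ltac:(lia)) as hS; rewrite S_INR in hS.
      apply Rle_trans with (c * (C * (INR n + 1) * (2 * c) ^ k)).
      + apply Rle_trans with (c * e (S n)); [exact (hcontr n hn) |].
        apply Rmult_le_compat_l; assumption.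
      + simpl; assert (0 <= C * (2 * c) ^ k * c) by (repeat apply Rmult_le_pos; lra).
        nra. }
  intros n hn.
  assert (hx : 1 <= INR n) by (apply (le_INR 1); exact hn).
  destruct (Rle_or_lt (e n) 0) as [h | hpos]; [exact h | exfalso].
  destruct (Req_dec C 0) as [-> | hC0].
  { pose proof (hgrowth n hn); lra. }
  assert (hCn : 0 < C * INR n) by (apply Rmult_lt_0_compat; lra).
  destruct (pow_lt_1_zero (2 * c) ltac:(rewrite Rabs_pos_eq; lra) (e n / (C * INR n))
              ltac:(apply Rdiv_lt_0_compat; assumption)) as [k hk].
  specialize (hk k (Nat.le_refl k)); rewrite Rabs_pos_eq in hk by (apply pow_le; lra).
  pose proof (hiter k n hn) as hb.
  apply (Rmult_lt_compat_l (C * INR n)) in hk; [| exact hCn].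
  replace (C * INR n * (e n / (C * INR n))) with (e n) in hk by (field; lra).
  lra.
Qed.

Lemma Rabs_cf_step_error (x R Q : R) : 0 < x -> 2 * x <= R -> 2 * x <= Q ->
  Rabs (x ^ 2 / R - (x ^ 2 - / 4) / Q) <= Rabs (R - Q) / 4 + / (4 * Q).
Proof.
  intros hx hR hQ.
  set (c := x ^ 2 / (R * Q)).
  assert (hc : 0 <= c <= / 4).
  { assert (hRQ : 0 < R * Q) by nra.
    unfold c; split.
    - unfold Rdiv; apply Rmult_le_pos; [nra | apply Rlt_le, Rinv_0_lt_compat, hRQ].
    - apply Rmult_le_reg_r with (R * Q); [exact hRQ |].
      unfold Rdiv; rewrite Rmult_assoc, Rinv_l by lra; nra. }
  replace (x ^ 2 / R - (x ^ 2 - / 4) / Q) with (- c * (R - Q) + / (4 * Q))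
    by (unfold c; field; lra).
  eapply Rle_trans; [apply Rabs_triang |].
  rewrite Rabs_mult, Rabs_Ropp, (Rabs_pos_eq c) by lra.
  rewrite (Rabs_pos_eq (/ (4 * Q))) by (apply Rlt_le, Rinv_0_lt_compat; lra).
  pose proof (Rabs_pos (R - Q)); nra.
Qed.

Definition silver : R := 1 + sqrt 2.

Lemma sqrt2_sq : sqrt 2 * sqrt 2 = 2.
Proof. apply sqrt_sqrt; lra. Qed.

Lemma sqrt2_bounds : 7/5 < sqrt 2 < 3/2.
Proof. pose proof sqrt2_sq; pose proof (sqrt_pos 2); split; nra. Qed.

Lemma silver_sq : silver * silver = 2 * silver + 1.
Proof. unfold silver; pose proof sqrt2_sq; nra. Qed.

Lemma silver_bounds : 12/5 < silver < 5/2.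
Proof. unfold silver; pose proof sqrt2_bounds; lra. Qed.

(* With m = 2n-1 and j = k-n, sqrt 2 times the distance is |m - sqrt 2 j|, whose product
   with |m + sqrt 2 j| < 4n is the nonzero integer |m^2 - 2 j^2|. *)
Lemma silver_floor_gap (n : nat) (k : Z) : (1 <= n)%nat ->
  3 / 20 < INR n * Rabs (silver * INR n - / 2 * sqrt 2 - IZR k).
Proof.
  intros hn.
  assert (hx : 1 <= INR n) by (apply (le_INR 1); exact hn).
  pose proof sqrt2_sq as hs; pose proof sqrt2_bounds as hsb.
  set (j := (k - Z.of_nat n)%Z).
  set (m := 2 * INR n - 1).
  set (v := m - sqrt 2 * IZR j).
  assert (hv : sqrt 2 * (silver * INR n - / 2 * sqrt 2 - IZR k) = v).
  { unfold v, m, j, silver; rewrite minus_IZR, <- INR_IZR_INZ.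
    transitivity (sqrt 2 * INR n + (sqrt 2 * sqrt 2) * (INR n - / 2) - sqrt 2 * IZR k);
      [field | rewrite hs; field]. }
  assert (hnorm : 1 <= Rabs v * Rabs (2 * m - v)).
  { rewrite <- Rabs_mult.
    replace (v * (2 * m - v))
      with (IZR ((2 * Z.of_nat n - 1) * (2 * Z.of_nat n - 1) - 2 * j * j)).
    - rewrite <- abs_IZR; apply IZR_le.
      pose proof (odd_square_ne_twice_square (Z.of_nat n) j); lia.
    - rewrite minus_IZR, !mult_IZR, minus_IZR, mult_IZR, <- INR_IZR_INZ.
      transitivity (m * m - (sqrt 2 * sqrt 2) * IZR j * IZR j);
        [rewrite hs; unfold m; ring | unfold v; ring]. }
  set (a := Rabs (silver * INR n - / 2 * sqrt 2 - IZR k)).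
  assert (ha : sqrt 2 * a = Rabs v).
  { unfold a; rewrite <- hv, Rabs_mult, (Rabs_pos_eq (sqrt 2)) by lra; reflexivity. }
  assert (0 <= a) by apply Rabs_pos.
  destruct (Rle_or_lt 1 (Rabs v)) as [hbig | hsmall].
  - nra.
  - assert (hw : Rabs (2 * m - v) < 4 * INR n).
    { assert (0 <= 2 * m) by (unfold m; lra).
      apply Rabs_def1; pose proof (Rabs_def2 v 1 hsmall); unfold m in *; lra. }
    assert (0 <= Rabs (2 * m - v)) by apply Rabs_pos.
    assert (hv0 : 0 < Rabs v) by nra.
    assert (1 < Rabs v * (4 * INR n)).
    { apply Rle_lt_trans with (Rabs v * Rabs (2 * m - v)); [exact hnorm |].
      apply Rmult_lt_compat_l; assumption. }
    nra.
Qed.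

Definition silver_approx (n : nat) : R := silver * (INR n - / 2).

Lemma silver_approx_rec (n : nat) :
  silver_approx n = 2 * INR n - 1 + (INR n ^ 2 - / 4) / silver_approx (S n).
Proof.
  pose proof silver_bounds; pose proof (pos_INR n).
  unfold silver_approx; rewrite S_INR.
  assert (E : (silver * (INR n - / 2) - (2 * INR n - 1)) * (silver * (INR n + 1 - / 2))
              = INR n ^ 2 - / 4).
  { transitivity ((silver * silver - 2 * silver) * (INR n ^ 2 - / 4)); [field |].
    rewrite silver_sq; field. }
  rewrite <- E; field; nra.
Qed.

Lemma error_bound_stable (n : nat) : (1 <= n)%nat ->
  / (4 * silver_approx (S n)) + 3 / (20 * (INR n + 1)) / 4 <= 3 / (20 * INR n).
Proof.
  intros hn.
  assert (hx : 1 <= INR n) by (apply (le_INR 1); exact hn).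
  pose proof silver_bounds.
  assert (h1 : / (4 * silver_approx (S n)) <= / (48 / 5 * INR n)).
  { apply Rinv_le_contravar; [nra |].
    unfold silver_approx; rewrite S_INR; nra. }
  assert (h2 : 3 / (20 * (INR n + 1)) / 4 <= 3 / (80 * INR n)).
  { unfold Rdiv; rewrite Rmult_assoc, <- Rinv_mult.
    apply Rmult_le_compat_l; [lra |]; apply Rinv_le_contravar; lra. }
  replace (3 / (20 * INR n)) with (/ (48 / 5 * INR n) + 3 / (80 * INR n) + / (120 * INR n))
    by (field; lra).
  assert (0 < / (120 * INR n)) by (apply Rinv_0_lt_compat; lra).
  lra.
Qed.

Section ContinuedFraction.

Variable r : nat -> R.
Hypothesis r_pos : forall n : nat, (1 <= n)%nat -> 0 < r n.
Hypothesis r_rec : forall n : nat, (1 <= n)%nat ->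
  r n = 2 * INR n - 1 + INR n ^ 2 / r (S n).

Lemma r_lower (n : nat) : (1 <= n)%nat -> 2 * INR n - 1 <= r n.
Proof.
  intros hn; rewrite (r_rec n hn).
  assert (0 <= INR n ^ 2 / r (S n)).
  { unfold Rdiv; apply Rmult_le_pos; [nra | apply Rlt_le, Rinv_0_lt_compat, r_pos; lia]. }
  lra.
Qed.

Lemma r_upper (n : nat) : (1 <= n)%nat -> r n <= 2 * INR n - 1 + INR n / 2.
Proof.
  intros hn; rewrite (r_rec n hn).
  assert (hx : 1 <= INR n) by (apply (le_INR 1); exact hn).
  pose proof (r_lower (S n) ltac:(lia)) as hl; rewrite S_INR in hl.
  assert (INR n ^ 2 / r (S n) <= INR n / 2); [| lra].
  apply Rmult_le_reg_r with (r (S n)); [lra |].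
  unfold Rdiv; rewrite Rmult_assoc, Rinv_l by lra; nra.
Qed.

Lemma r_error_le (n : nat) : (1 <= n)%nat -> Rabs (r n - silver_approx n) <= INR n.
Proof.
  intros hn.
  pose proof (r_lower n hn); pose proof (r_upper n hn); pose proof silver_bounds.
  assert (1 <= INR n) by (apply (le_INR 1); exact hn).
  unfold silver_approx; apply Rabs_le; split; nra.
Qed.

Lemma r_error_contract (n : nat) : (1 <= n)%nat ->
  Rabs (r n - silver_approx n)
  <= Rabs (r (S n) - silver_approx (S n)) / 4 + / (4 * silver_approx (S n)).
Proof.
  intros hn.
  assert (hx : 1 <= INR n) by (apply (le_INR 1); exact hn).
  pose proof (r_lower (S n) ltac:(lia)) as hl; rewrite S_INR in hl.
  pose proof silver_bounds.
  rewrite (r_rec n hn), (silver_approx_rec n).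
  replace (2 * INR n - 1 + INR n ^ 2 / r (S n)
           - (2 * INR n - 1 + (INR n ^ 2 - / 4) / silver_approx (S n)))
    with (INR n ^ 2 / r (S n) - (INR n ^ 2 - / 4) / silver_approx (S n)) by ring.
  apply Rabs_cf_step_error; [lra | lra |].
  unfold silver_approx; rewrite S_INR; nra.
Qed.

Lemma r_error_bound (n : nat) : (1 <= n)%nat ->
  INR n * Rabs (r n - silver_approx n) <= 3 / 20.
Proof.
  intros hn.
  assert (hx : 1 <= INR n) by (apply (le_INR 1); exact hn).
  set (e m := Rabs (r m - silver_approx m) - 3 / (20 * INR m)).
  assert (he : e n <= 0).
  { apply (nonpos_of_contraction e (/ 4) 1); [lra | lra | lra | intros m hm | intros m hm | exact hn].
    - pose proof (r_error_contract m hm); pose proof (error_bound_stable m hm).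
      unfold e; rewrite S_INR; lra.
    - assert (0 < 3 / (20 * INR m)).
      { apply Rdiv_lt_0_compat; [lra |]; apply (le_INR 1) in hm; simpl in hm; lra. }
      pose proof (r_error_le m hm); unfold e; lra. }
  unfold e in he.
  apply Rmult_le_reg_r with (/ INR n); [apply Rinv_0_lt_compat; lra |].
  rewrite Rmult_comm, <- Rmult_assoc, Rinv_l, Rmult_1_l by lra.
  replace (3 / 20 * / INR n) with (3 / (20 * INR n)) by (field; lra); lra.
Qed.

End ContinuedFraction.

Theorem mainTheorem8 (r : nat -> R)
  (hpos : forall n : nat, (1 <= n)%nat -> 0 < r n)
  (hrec : forall n : nat, (1 <= n)%nat ->
     r n = 2 * INR n - 1 + (INR n) ^ 2 / r (S n)) :
  forall n : nat, (1 <= n)%nat ->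
    floorR (r n + / 2) = floorR ((1 + sqrt 2) * INR n - / 2 * sqrt 2).
Proof.
  intros n hn; unfold floorR; change (1 + sqrt 2) with silver.
  replace (r n + / 2) with (silver * INR n - / 2 * sqrt 2 + (r n - silver_approx n))
    by (unfold silver_approx, silver; field).
  apply Int_part_add_small; intros k.
  pose proof (r_error_bound r hpos hrec n hn).
  pose proof (silver_floor_gap n k hn).
  apply Rmult_lt_reg_l with (INR n); [apply (lt_INR 0); lia | lra].
Qed.
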